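(* Let $x_n=2^{-n}$ for $n\in\mathbb N$, and let $(y_n)$ be a sequence of real numbers such that $\sum_n y_n$ is absolutely convergent and $y_n\neq\sum_{i>n}y_i$ for every $n\in\mathbb N$. Then every point of the achievement set $E(x_n,y_n)\subset\mathbb R^2$ has a unique representation, and $E(x_n,y_n)$ is a Cantor set.
   Context: For an absolutely convergent series $\sum_n v_n$ in $\mathbb R^d$, its achievement set is $E(v)=\{\sum_{n=1}^\infty \varepsilon_n v_n : (\varepsilon_n)\in\{0,1\}^{\mathbb N}\}$; $E(x_n,y_n)$ denotes the achievement set of $((x_n,y_n))_n$ in $\mathbb R^2$. A point $a$ has a unique representation if there is exactly one set $A\subset\mathbb N$ with $a=\sum_{i\in A}(x_i,y_i)$. A Cantor set is a nonempty, totally disconnected, perfect, compact subset of $\mathbb R^n$. *)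

From HB Require Import structures.
From mathcomp Require Import all_boot all_order all_algebra.
From mathcomp Require Import all_classical all_reals all_analysis.
Set Implicit Arguments. Unset Strict Implicit. Unset Printing Implicit Defensive.
Import Order.TTheory GRing.Theory Num.Theory.
Import numFieldNormedType.Exports.
Local Open Scope classical_set_scope.
Local Open Scope ring_scope.

Definition subsum {R : realType} (u : nat -> R) (A : set nat) : R :=
  limn (fun n => \sum_(0 <= i < n | i \in A) u i).

Definition tailsum {R : realType} (u : nat -> R) (m : nat) : R :=
  limn (fun n => \sum_(m.+1 <= i < n) u i).

Definition subsum2 {R : realType} (x y : nat -> R) (A : set nat) : R * R :=
  (subsum x A, subsum y A).

Definition achievement_set2 {R : realType} (x y : nat -> R) : set (R * R) :=
  range (subsum2 x y).

Definition unique_representation {R : realType} (x y : nat -> R) (a : R * R) : Prop :=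
  exists! A : set nat, a = subsum2 x y A.

Definition cantor_set {T : topologicalType} (C : set T) : Prop :=
  [/\ C !=set0, totally_disconnected C, perfect_set C & compact C].

From HB Require Import structures.
From mathcomp Require Import all_boot all_order all_algebra.
From mathcomp Require Import all_classical all_reals all_analysis.
From mathcomp Require Import ring lra.
Import Order.TTheory GRing.Theory Num.Theory.
Import numFieldNormedType.Exports.
Local Open Scope classical_set_scope.
Local Open Scope ring_scope.

(* Since x_n = 2^-(n+1) is the sum of all later x_i, two index sets with the
   same x-sum and first difference at n (say n in A) must be A = P + {n} and
   B = P + (n, oo); their y-sums then differ by y_n - sum_(i > n) y_i <> 0.
   Hence A |-> sum_(i in A) (x_i, y_i) is injective.  Read on the Cantor space
   2^N it is continuous (the tails of an absolutely convergent series are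
   small), and a continuous injection of a compact, perfect, zero-dimensional
   space into a Hausdorff space has a Cantor set as its image. *)

Section continuous_injection_of_compact.
Context {T U : topologicalType} (f : T -> U).
Hypotheses (cptT : compact [set: T]) (hsdU : hausdorff_space U).
Hypotheses (fC : continuous f) (fI : injective f).

Lemma closed_image A : closed A -> closed (f @` A).
Proof.
move=> clA; apply: compact_closed hsdU _.
apply: continuous_compact; first exact: continuous_subspaceT.
exact: subclosed_compact clA cptT (subsetT _).
Qed.

Lemma totally_disconnected_range :
  zero_dimensional T -> totally_disconnected (range f).
Proof.
move=> zdT _ [b _ <-]; rewrite eqEsubset.
split=> [q [C [Cfb CE ctdC Cq]]|_ ->]; last first.
  by apply: connected_component_refl; exists b.
have [c _ cq] := CE q Cq; subst q; apply: contrapT => /eqP fcNfb.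
have /zdT[V [[oV clV] Vb NVc]] : b != c by apply: contra_neq fcNfb => ->.
suff CfV : C `&` (f @` V) = C.
  have [_ [d Vd /fI dc]] : (C `&` (f @` V)) (f c) by rewrite CfV.
  by apply: NVc; rewrite -dc.
apply: ctdC; first by exists (f b); split => //; exists b.
  exists (~` (f @` (~` V))); first exact/closed_openC/closed_image/open_closedC.
  apply/seteqP; split => z [Cz fVz]; split => //.
    by move=> [d NVd dz]; case: fVz => e Ve; rewrite -dz => /fI ed; apply: NVd; rewrite -ed.
  have [d _ dz] := CE z Cz; exists d => //.
  by apply: contrapT => NVd; apply: fVz; exists d.
by exists (f @` V) => //; exact: closed_image.
Qed.

Lemma perfect_range : perfect_set [set: T] -> perfect_set (range f).
Proof.
move=> [_ lpT]; have clf : closed (range f) by exact: closed_image closedT.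
split => //; apply/seteqP; split.
  by move=> p /subset_limit_point; rewrite -(closure_id _).1.
move=> _ [b _ <-] W /fC Wfb.
have : limit_point [set: T] b by rewrite lpT.
move=> /(_ _ Wfb) [c [cNb _ Wfc]]; exists (f c); split => //.
  by apply: contra_neq cNb => /fI.
Qed.

Lemma cantor_set_range : [set: T] !=set0 -> perfect_set [set: T] ->
  zero_dimensional T -> cantor_set (range f).
Proof.
move=> [t _] perT zdT; split.
- by exists (f t), t.
- exact: totally_disconnected_range.
- exact: perfect_range.
- by apply: continuous_compact => //; exact: continuous_subspaceT.
Qed.

End continuous_injection_of_compact.

Lemma in_set_pred {T} (P : pred T) t : (t \in [set s | P s]) = P t.
Proof. by apply/idP/idP => [/set_mem|/mem_set]. Qed.

Section subsum.
Context {R : realType}.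
Implicit Types (u : nat -> R) (A B : set nat).

Lemma norm_restrict_le u A i : `|(u \_ A) i| <= `|u i|.
Proof. by rewrite patchE; case: ifP; rewrite ?normr0. Qed.

Lemma normed_cvg_restrict u A :
  cvgn [normed series u] -> cvgn [normed series (u \_ A)].
Proof. exact: series_le_cvg (fun=> normr_ge0 _) (fun=> normr_ge0 _) (norm_restrict_le u A). Qed.

Lemma cvg_series_restrict u A : cvgn [normed series u] -> cvgn (series (u \_ A)).
Proof. by move=> cu; apply: normed_cvg; exact: normed_cvg_restrict. Qed.

Lemma subsumE u A : subsum u A = limn (series (u \_ A)).
Proof. by congr (limn _); apply/funext => n; rewrite /series /= big_mkcond. Qed.

Lemma subsumB u A B : cvgn [normed series u] ->
  subsum u A - subsum u B = limn (series (u \_ A - u \_ B)).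
Proof. by move=> cu; rewrite !subsumE lim_seriesB //; exact: cvg_series_restrict. Qed.

Lemma subsum_set1 u n : subsum u [set n] = u n.
Proof.
rewrite subsumE; apply: (@lim_near_cst _ (@Rhausdorff R)); near=> m.
rewrite /series /= -big_mkcond /=; under eq_bigl do rewrite in_set1.
by rewrite big_nat1_eq ifT //; near: m; exists n.+1.
Unshelve. all: end_near. Qed.

Lemma series_restrict_ge u N m :
  series (u \_ [set i | (N <= i)%N]) m = \sum_(N <= i < m) u i.
Proof.
elim: m => [|m IH]; first by rewrite /series /= !big_geq.
rewrite seriesSr IH patchE; case: ifPn => [/set_mem Nm|].
  by rewrite (big_nat_recr m).
rewrite notin_setE /= => /negP; rewrite -ltnNge => mN.
by rewrite !big_geq ?(ltnW mN) //; exact: addr0.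
Qed.

Lemma tailsum_subsum u n : tailsum u n = subsum u [set i | (n < i)%N].
Proof. by rewrite subsumE; congr (limn _); apply/funext => m; rewrite series_restrict_ge. Qed.

Lemma subsum_ge u N : cvgn (series u) ->
  subsum u [set i | (N <= i)%N] = limn (series u) - series u N.
Proof.
move=> cu; rewrite subsumE; apply: (@cvg_lim _ (@Rhausdorff R)).
have : series u n - series u N @[n --> \oo] --> limn (series u) - series u N.
  exact: cvgB cu (cvg_cst _).
apply: cvg_trans; apply: near_eq_cvg; near=> m.
by rewrite series_restrict_ge sub_series_geq //; near: m; exists N.
Unshelve. all: end_near. Qed.

Lemma tailsumE u n : cvgn (series u) -> tailsum u n = limn (series u) - series u n.+1.
Proof. by move=> cu; rewrite tailsum_subsum subsum_ge. Qed.

Lemma dist_subsum_le u A B N : cvgn [normed series u] ->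
  (forall i, (i < N)%N -> (i \in A) = (i \in B)) ->
  `|subsum u A - subsum u B| <= limn [normed series u] - [normed series u] N.
Proof.
move=> cu AB; pose v i := `|u i|; pose w := v \_ [set i | (N <= i)%N].
have w_ge0 i : 0 <= w i by rewrite /w /v patchE /point /=; case: ifP.
have dist_le i : `|(u \_ A) i - (u \_ B) i| <= w i.
  have [Ni|/AB ABi] := leqP N i; last by rewrite !patchE ABi subrr normr0.
  rewrite /w !patchE /point /= [X in _ <= X]ifT; last exact: mem_set.
  by rewrite /v; case: ifP; case: ifP; rewrite ?subrr ?subr0 ?sub0r ?normrN ?normr0.
have cvg_w : cvgn (series w).
  apply: cvg_series_restrict; rewrite ger0_normed => [|n]; [exact: cu|exact: normr_ge0].
have cvg_dist := series_le_cvg (fun=> normr_ge0 _) w_ge0 dist_le cvg_w.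
rewrite subsumB // -subsum_ge // subsumE.
apply: le_trans (lim_series_norm cvg_dist) _.
exact: lim_series_le dist_le.
Qed.

Lemma series_ge0_cvg0 u : (forall i, 0 <= u i) -> series u @ \oo --> 0 ->
  forall i, u i = 0.
Proof.
move=> u_ge0 u0 i; apply/eqP; rewrite eq_le u_ge0 andbT.
rewrite -(cvg_lim (@Rhausdorff R) u0).
apply: le_trans (nondecreasing_cvgn_le _ (cvgP _ u0) i.+1).
  by rewrite seriesSr lerDr; apply: sumr_ge0 => k _.
by move=> a b ab; apply: nondecreasing_series => // k _ _.
Qed.

End subsum.

Lemma prefix_near (b : cantor_space) n :
  \forall c \near b, forall i, (i < n)%N -> b i = c i.
Proof.
elim: n => [|n IH]; first by near=> c => ?; rewrite ltn0.
near=> c => i; rewrite leq_eqVlt => /predU1P[[->]|iSn]; last by rewrite (near IH c).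
near: c; exists (proj n @^-1` [set b n]); split => //.
suff : @open cantor_space (proj n @^-1` [set b n]) by [].
apply: open_comp; [move=> + _; exact: proj_continuous| apply: discrete_open].
Unshelve. all: end_near. Qed.

Lemma continuous_subsum {R : realType} (u : nat -> R) : cvgn [normed series u] ->
  continuous (fun b : cantor_space => subsum u [set` b]).
Proof.
move=> cu b; apply/cvgrPdist_lt => e e0.
have [N _ tail_lt] := (cvgrPdist_lt _ _).1 cu e e0.
near=> c; apply: le_lt_trans (dist_subsum_le _ _ _ N cu _) _.
  by move=> i iN; rewrite !mem_setE !unfold_in (near (prefix_near b N) c).
exact: le_lt_trans (ler_norm _) (tail_lt N (leqnn N)).
Unshelve. all: end_near. Qed.

Section first_difference.
Context {R : realType} {A B : set nat} {n : nat}.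
Hypotheses (AB_lt : forall i, (i < n)%N -> (i \in A) = (i \in B)).
Hypotheses (nA : n \in A) (nB : n \notin B).
Implicit Types u : nat -> R.

(* For positive x, the term x_i dominates |(x \_ A) i - (x \_ B) i|, so
   [excess x] is nonnegative; its sum is zero when the x-sums agree and
   x_n = sum_(i > n) x_i, which pins down A and B beyond n. *)
Let excess u i := if (n < i)%N then (u \_ A) i - (u \_ B) i + u i else 0.

Lemma restrict_first_difference u :
  (u \_ A - u \_ B) - (u \_ [set n] - u \_ [set i | (n < i)%N]) = excess u.
Proof.
apply/funext => i; rewrite /excess !fctE !patchE in_set1 in_set_pred /point /=.
by case: (ltngtP n i) => [_|/AB_lt ->|<-]; rewrite ?nA ?(negbTE nB); lra.
Qed.

Lemma series_excess_cvg u : cvgn [normed series u] ->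
  series (excess u) @ \oo --> (subsum u A - subsum u B) - (u n - tailsum u n).
Proof.
move=> cu; have cvg_u S : cvgn (series (u \_ S)) := cvg_series_restrict u S cu.
have cvg_AB := is_cvg_seriesB (cvg_u A) (cvg_u B).
have cvg_tail := is_cvg_seriesB (cvg_u [set n]) (cvg_u [set i | (n < i)%N]).
rewrite -restrict_first_difference -[u n](subsum_set1 u) tailsum_subsum !subsumB //.
by rewrite -lim_seriesB //; exact: is_cvg_seriesB.
Qed.

Lemma first_difference_tail (x : nat -> R) : (forall i, 0 < x i) -> cvgn [normed series x] ->
  tailsum x n = x n -> subsum x A = subsum x B ->
  forall i, (n < i)%N -> i \notin A /\ i \in B.
Proof.
move=> x_gt0 cx tail_xn xAB.
have excess_ge0 i : 0 <= excess x i.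
  rewrite /excess !patchE /point /=; have := x_gt0 i.
  by case: ifP => // _; case: ifP; case: ifP => _ _; lra.
have := series_excess_cvg x cx; rewrite xAB tail_xn !subrr.
move=> /(series_ge0_cvg0 _ excess_ge0) excess0 i ni.
have := excess0 i; rewrite /excess ni !patchE /point /=; have := x_gt0 i.
by case: ifP; case: ifP => _ _ //; lra.
Qed.

Lemma subsum_first_difference u : cvgn [normed series u] ->
  (forall i, (n < i)%N -> i \notin A /\ i \in B) ->
  subsum u A - subsum u B = u n - tailsum u n.
Proof.
move=> cu tailAB; apply/eqP; rewrite -subr_eq0; apply/eqP.
apply: (cvg_unique (@Rhausdorff R) (series_excess_cvg u cu)) => /=.
have -> : series (excess u) = cst 0.
  apply/funext => m; rewrite /series /= big1 // => i _.
  rewrite /excess; case: ifP => // /tailAB[/negbTE iA iB].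
  by rewrite !patchE iA iB /point /=; lra.
exact: cvg_cst.
Qed.

End first_difference.

Lemma subsum2_injective {R : realType} (x y : nat -> R) :
  (forall i, 0 < x i) -> cvgn [normed series x] -> (forall n, tailsum x n = x n) ->
  cvgn [normed series y] -> (forall n, y n != tailsum y n) ->
  injective (subsum2 x y).
Proof.
move=> x_gt0 cx x_tail cy y_tail.
have first_diff (A B : set nat) n : (forall i, (i < n)%N -> (i \in A) = (i \in B)) ->
    n \in A -> n \notin B -> subsum2 x y A != subsum2 x y B.
  move=> AB_lt nA nB; apply/eqP => -[xAB yAB].
  have tailAB := first_difference_tail AB_lt nA nB x x_gt0 cx (x_tail n) xAB.
  move/eqP: (y_tail n); apply; apply/eqP; rewrite -subr_eq0.
  by rewrite -(subsum_first_difference AB_lt nA nB y cy tailAB) yAB subrr.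
move=> A B ABeq.
suff memAB i : (i \in A) = (i \in B).
  by apply/seteqP; split => i /mem_set; [rewrite memAB|rewrite -memAB] => /set_mem.
apply/eqP; apply: contraT => ABi.
have [n ABn n_min] := ex_minnP (ex_intro (fun i => (i \in A) != (i \in B)) i ABi).
have AB_lt j : (j < n)%N -> (j \in A) = (j \in B).
  by move=> jn; apply/eqP; apply: contraT => /n_min; rewrite leqNgt jn.
have [nA|nNA] := boolP (n \in A).
  have nB : n \notin B by move: ABn; rewrite nA.
  by have := first_diff A B n AB_lt nA nB; rewrite ABeq eqxx.
have nB : n \in B by move: ABn; rewrite (negbTE nNA); case: (n \in B).
have BA_lt j (jn : (j < n)%N) : (j \in B) = (j \in A) by rewrite AB_lt.
by have := first_diff B A n BA_lt nB nNA; rewrite ABeq eqxx.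
Qed.

Section halves.
Context {R : realType}.
Let h (i : nat) : R := 2^- i.+1.

Lemma series_halves m : series h m = 1 - 2^- m.
Proof.
elim: m => [|m IH]; first by rewrite /series /= big_nil expr0 invr1 subrr.
by rewrite seriesSr IH /h exprS invfM; field.
Qed.

Lemma cvg_series_halves : series h @ \oo --> (1 : R).
Proof.
rewrite (funext series_halves) -[X in _ --> X]subr0.
apply: cvgB; first exact: cvg_cst.
have half_lt1 : `|2^-1 : R| < 1 by rewrite ger0_norm ?invr_ge0 // invf_lt1 ?ltr1n.
apply: cvg_trans (cvg_expr half_lt1); apply: near_eq_cvg; near=> m.
by rewrite exprVn.
Unshelve. all: end_near.
Qed.

Lemma normed_cvg_halves : cvgn [normed series h].
Proof.
rewrite ger0_normed; first exact: cvgP cvg_series_halves.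
by move=> i; rewrite /h invr_ge0 exprn_ge0.
Qed.

Lemma tailsum_halves n : tailsum h n = h n.
Proof.
rewrite tailsumE; last exact: cvgP cvg_series_halves.
by rewrite (cvg_lim (@Rhausdorff R) cvg_series_halves) series_halves opprB addrC subrK.
Qed.

End halves.

Theorem mainTheorem4 (R : realType) (x y : nat -> R) :
  (forall n, x n = (2 : R) ^- n.+1) ->
  cvgn (series (fun n => `|y n|)) ->
  (forall n, y n != tailsum y n) ->
  (forall a, achievement_set2 x y a -> unique_representation x y a) /\
  cantor_set (achievement_set2 x y).
Proof.
move=> x_halves cy y_tail; rewrite (funext x_halves).
have x_gt0 i : 0 < (2 : R) ^- i.+1 by rewrite invr_gt0 exprn_gt0.
have inj := subsum2_injective _ y x_gt0 normed_cvg_halves tailsum_halves cy y_tail.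
split; first by move=> _ [A _ <-]; exists A; split => // B /inj.
pose F (b : cantor_space) := subsum2 (fun i => (2 : R) ^- i.+1) y [set` b].
have -> : achievement_set2 (fun i => (2 : R) ^- i.+1) y = range F.
  apply/seteqP; split => _ [A _ <-]; last by exists [set` A].
  exists (fun i => i \in A) => //; congr subsum2.
  by apply/seteqP; split => i; [exact: set_mem | exact: mem_set].
apply: cantor_set_range.
- exact: cantor_space_compact.
- exact: norm_hausdorff.
- move=> b; exact: cvg_pair (@continuous_subsum R _ normed_cvg_halves b) (continuous_subsum _ cy b).
- by move=> b c /(inj [set` b] [set` c]) bc; apply/funext => i; rewrite -!in_set_pred bc.
- by exists point.
- exact: cantor_perfect.
- exact: cantor_zero_dimensional.
Qed.
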